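(* Let $G$ be a finite graph with $\mathrm{Aut}(G)\neq\{\mathrm{id}\}$, and let $\alpha\in\mathrm{Aut}(G)\setminus\{\mathrm{id}\}$ be such that $c(\alpha)=\max\{c(\beta):\beta\in\mathrm{Aut}(G)\}$ (equivalently $\theta(G)=c(\alpha)+1$). Then there is a prime number $p$ such that $\alpha$ has order $p$. In particular, every cycle of $\alpha$ has length $p$ or $1$.
   Context: All graphs are finite and simple. For a permutation $\alpha$ of $V(G)$, $c(\alpha)$ denotes the number of cycles in the cycle decomposition of $\alpha$, fixed points counting as cycles of length 1, with the convention $c(\mathrm{id})=0$. The distinguishing threshold $\theta(G)$ of a graph $G$ is the minimum number $k$ such that every vertex coloring of $G$ using exactly $k$ colors is distinguishing (i.e. no non-identity automorphism of $G$ maps every vertex to a vertex of the same color); equivalently, $\theta(G)=1+\max\{c(\alpha):\alpha\in\mathrm{Aut}(G)\}$. *)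

From mathcomp Require Import all_boot all_order all_fingroup.
Set Implicit Arguments.
Unset Strict Implicit.
Unset Printing Implicit Defensive.

(* A finite simple graph is a symmetric irreflexive relation e on a finType T
   (symmetry/irreflexivity are hypotheses of the theorem). *)

Definition is_aut (T : finType) (e : rel T) (s : {perm T}) : bool :=
  [forall x, forall y, e (s x) (s y) == e x y].

(* c(s): number of cycles of s (fixed points count as 1-cycles),
   with the convention c(id) = 0. *)
Definition ncycles (T : finType) (s : {perm T}) : nat :=
  if s == 1%g then 0 else #|porbits s|.

From mathcomp Require Import all_boot all_order all_fingroup.
From mathcomp Require Import cyclic.

Set Implicit Arguments.
Unset Strict Implicit.
Unset Printing Implicit Defensive.

(* Let n be the order of a maximal-cycle automorphism a and let
   p be the least prime factor of n.  Some cycle of a has length divisible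
   by p (otherwise a^(n/p) would already be the identity).  Raising a to the
   power p splits such a cycle (a point and its image land in different
   cycles of a^p), while every cycle of a is a union of cycles of a^p; hence a^p has strictly more cycles than a.
   Since a^p is again an automorphism, maximality forces a^p = 1, so n
   divides p, i.e. n = p.  Finally every cycle length divides the order. *)

Section CycleLengths.
Variable T : finType.
Implicit Types (s : {perm T}) (x : T).

Lemma iter_porbit_mul s x q : iter (q * #|porbit s x|) s x = x.
Proof. by elim: q => //= q IH; rewrite mulSn iterD IH iter_porbit. Qed.

Lemma permX_modporbit s x k : (s ^+ k)%g x = (s ^+ (k %% #|porbit s x|))%g x.
Proof.
by rewrite {1}(divn_eq k #|porbit s x|) addnC !permX iterD iter_porbit_mul.
Qed.

(* No positive power of s below the cycle length fixes x: the trajectory of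
   x of that length is duplicate-free. *)
Lemma permX_fix_small s x i :
  i < #|porbit s x| -> (s ^+ i)%g x = x -> i = 0.
Proof.
move=> lt_i fix_x; apply/eqP.
have L_gt0 : 0 < #|porbit s x| by rewrite lt0n card_porbit_neq0.
have size_gt0 : 0 < size (traject s x #|porbit s x|) by rewrite size_traject.
have i_lt_size : i < size (traject s x #|porbit s x|) by rewrite size_traject.
have := nth_uniq x i_lt_size size_gt0 (uniq_traject_porbit s x).
by rewrite !nth_traject // -permX fix_x /= eqxx => <-.
Qed.

Lemma permX_fix s x k : ((s ^+ k)%g x == x) = (#|porbit s x| %| k).
Proof.
have L_gt0 : 0 < #|porbit s x| by rewrite lt0n card_porbit_neq0.
rewrite permX_modporbit; apply/eqP/idP => [fix_x | /eqP ->].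
  by rewrite /dvdn (permX_fix_small (ltn_pmod k L_gt0) fix_x).
by rewrite expg0 perm1.
Qed.

Lemma permX_eq_mod s x i j :
  (s ^+ i)%g x = (s ^+ j)%g x -> i = j %[mod #|porbit s x|].
Proof.
wlog le_ij : i j / i <= j.
  by move=> W; case/orP: (leq_total i j) => ? E; [|symmetry]; apply: W.
move=> E; apply/eqP; rewrite eq_sym eqn_mod_dvd // -permX_fix.
move: E; rewrite -{1}(subnKC le_ij) addnC expgD permM => E.
by apply/eqP; apply: (@perm_inj _ (s ^+ i)%g); rewrite -E.
Qed.

Lemma card_porbit_dvd_order s x : #|porbit s x| %| #[s]%g.
Proof. by rewrite -permX_fix expg_order perm1. Qed.

(* Every prime factor of the order of s divides some cycle length: otherwise
   all cycle lengths divide #[s]/p, and s^(#[s]/p) would be trivial. *)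
Lemma prime_dvd_card_porbit s p :
  prime p -> p %| #[s]%g -> exists x, p %| #|porbit s x|.
Proof.
move=> p_pr p_dvd.
case: (pickP (fun x => p %| #|porbit s x|)) => [x px | ndvd]; first by exists x.
have Ldvd x : #|porbit s x| %| #[s]%g %/ p.
  have := card_porbit_dvd_order s x; rewrite -{1}(divnK p_dvd) Gauss_dvdl //.
  by rewrite coprime_sym prime_coprime // ndvd.
have n_dvd : #[s]%g %| #[s]%g %/ p.
  rewrite order_dvdn; apply/eqP/permP => y.
  by rewrite perm1; apply/eqP; rewrite permX_fix.
have q_gt0 : 0 < #[s]%g %/ p by rewrite divn_gt0 ?prime_gt0 // dvdn_leq.
by move: (dvdn_leq q_gt0 n_dvd); rewrite leqNgt ltn_Pdiv ?prime_gt1.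
Qed.

End CycleLengths.

Section CyclesOfPowers.
Variable T : finType.
Implicit Types (s : {perm T}) (x : T) (Q : {set T}).

Definition porbit_hull s Q : {set T} := \bigcup_(y in Q) porbit s y.

Lemma porbitX_sub s k x : porbit (s ^+ k)%g x \subset porbit s x.
Proof.
by apply/subsetP => y /porbitP [i ->]; rewrite -expgM mem_porbit.
Qed.

Lemma porbit_hullX s k x : porbit_hull s (porbit (s ^+ k)%g x) = porbit s x.
Proof.
apply/eqP; rewrite eqEsubset; apply/andP; split.
  apply/bigcupsP => y /(subsetP (porbitX_sub s k x)) y_in.
  by rewrite -eq_porbit_mem in y_in; rewrite (eqP y_in).
by rewrite (bigcup_max x) // porbit_id.
Qed.

Lemma porbits_hullX s k : porbits s = porbit_hull s @: porbits (s ^+ k)%g.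
Proof.
rewrite /porbits -imset_comp; apply: eq_imset => x /=.
by rewrite porbit_hullX.
Qed.

(* If some point x is separated from s x in s^k, then s^k has strictly more
   cycles than s: the hull map identifies their two distinct s^k-cycles. *)
Lemma card_porbits_ltX s k x :
  s x \notin porbit (s ^+ k)%g x -> #|porbits s| < #|porbits (s ^+ k)%g|.
Proof.
move=> sep; rewrite (porbits_hullX s k) ltn_neqAle leq_imset_card andbT.
apply: contra sep => /imset_injP hull_inj.
rewrite -eq_porbit_mem; apply/eqP/hull_inj; rewrite ?imset_f //.
by rewrite !porbit_hullX -[in porbit s (s x)](expg1 s) porbit_perm.
Qed.

Lemma porbitX_prime_split s p x :
  prime p -> p %| #|porbit s x| -> s x \notin porbit (s ^+ p)%g x.
Proof.
move=> p_pr p_dvd; apply/porbitP => -[i].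
rewrite -expgM -{1}(expg1 s) => /permX_eq_mod /(congr1 (modn^~ p)).
rewrite !modn_dvdm // modn_small ?prime_gt1 //.
by rewrite mulnC modnMl.
Qed.

Lemma ncycles_ltX s p :
  prime p -> p %| #[s]%g -> s != 1%g -> (s ^+ p)%g != 1%g ->
  ncycles s < ncycles (s ^+ p)%g.
Proof.
move=> p_pr p_dvd s1 sp1; rewrite /ncycles (negbTE s1) (negbTE sp1).
have [x px] := prime_dvd_card_porbit p_pr p_dvd.
exact: (card_porbits_ltX (porbitX_prime_split p_pr px)).
Qed.

End CyclesOfPowers.

Lemma is_autM (T : finType) (e : rel T) (a b : {perm T}) :
  is_aut e a -> is_aut e b -> is_aut e (a * b)%g.
Proof.
move=> /forallP Ha /forallP Hb; apply/forallP => x; apply/forallP => y.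
by rewrite !permM (eqP (forallP (Hb (a x)) (a y))) (forallP (Ha x)).
Qed.

Lemma is_autX (T : finType) (e : rel T) (a : {perm T}) k :
  is_aut e a -> is_aut e (a ^+ k)%g.
Proof.
move=> Ha; elim: k => [|k IH]; last by rewrite expgS is_autM.
by rewrite expg0; apply/forallP => x; apply/forallP => y; rewrite !perm1.
Qed.

Theorem mainTheorem1 (T : finType) (e : rel T)
  (e_sym : symmetric e) (e_irr : irreflexive e) (a : {perm T}) :
  is_aut e a -> a != 1%g ->
  (forall b : {perm T}, is_aut e b -> ncycles b <= ncycles a) ->
  exists p : nat, [/\ prime p, #[a]%g = p &
                     forall x : T, #|porbit a x| \in [:: p; 1]].
Proof.
move=> a_aut a1 a_max.
have n_gt1 : 1 < #[a]%g by rewrite ltn_neqAle order_gt0 andbT eq_sym order_eq1.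
set p := pdiv #[a]%g.
have p_pr : prime p by exact: pdiv_prime.
have p_dvd : p %| #[a]%g by exact: pdiv_dvd.
(* maximality forbids a^p from having more cycles, so a^p is trivial *)
have ap1 : (a ^+ p)%g == 1%g.
  apply: contraLR (a_max _ (is_autX p a_aut)) => ap1.
  by rewrite -ltnNge ncycles_ltX.
have n_eq_p : #[a]%g = p.
  by apply/(prime_nt_dvdP p_pr); rewrite ?order_dvdn // order_eq1.
exists p; split => // x.
have L_dvd := card_porbit_dvd_order a x; rewrite n_eq_p in L_dvd.
have /primeP [_ /(_ _ L_dvd)] := p_pr.
by case/orP => /eqP ->; rewrite !inE eqxx ?orbT.
Qed.
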